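(* Let $\mathfrak{n}$ be the real $7$-dimensional Lie algebra with basis $e_1,\dots,e_7$ whose nonzero brackets (up to antisymmetry) are $[e_1,e_2]=e_4$, $[e_1,e_4]=e_5$, $[e_1,e_5]=e_6$, $[e_1,e_6]=e_7$, $[e_2,e_3]=e_6$, $[e_2,e_4]=e_6$, $[e_2,e_5]=e_7$, $[e_3,e_4]=-e_7$. Then $\mathfrak{n}$ is an Einstein nilradical.
   Context: A real nilpotent Lie algebra $\mathfrak{n}$ is called an Einstein nilradical if it admits an inner product such that the left-invariant Riemannian metric it defines on the simply connected nilpotent Lie group with Lie algebra $\mathfrak{n}$ is a nilsoliton, i.e. its Ricci operator satisfies $\mathrm{Ric}=c\,\mathrm{Id}+D$ for some $c\in\mathbb{R}$ and some derivation $D$ of $\mathfrak{n}$. Brackets of basis elements not listed are zero. *)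

From HB Require Import structures.
From mathcomp Require Import all_boot all_order all_algebra.
From mathcomp Require Import reals.
Set Implicit Arguments. Unset Strict Implicit. Unset Printing Implicit Defensive.
Import Order.TTheory GRing.Theory Num.Theory.
Local Open Scope ring_scope.

Section LieDefs.
Variables (R : realType) (n : nat).

Definition lbr (c : 'I_n -> 'I_n -> 'rV[R]_n) (u v : 'rV[R]_n) : 'rV[R]_n :=
  \sum_(i < n) \sum_(j < n) (u 0 i * v 0 j) *: c i j.

Definition ebase (k : 'I_n) : 'rV[R]_n := delta_mx 0 k.

Definition lie_nilpotent (c : 'I_n -> 'I_n -> 'rV[R]_n) : Prop :=
  exists k : nat, forall (xs : k.-tuple 'rV[R]_n) (y : 'rV[R]_n),
    foldr (fun x acc => lbr c x acc) y xs = 0.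

Definition inner_product (G : 'M[R]_n) : Prop :=
  G^T = G /\ forall v : 'rV[R]_n, v != 0 -> 0 < (v *m G *m v^T) 0 0.

Definition ip (G : 'M[R]_n) (u v : 'rV[R]_n) : R := (u *m G *m v^T) 0 0.

(* Levi-Civita connection of the left-invariant metric on left-invariant
   fields, via the Koszul formula
   2 <nabla_X Y, Z> = <[X,Y],Z> - <[Y,Z],X> + <[Z,X],Y>. *)
Definition nabla c G (X Y : 'rV[R]_n) : 'rV[R]_n :=
  (2%:R^-1 *: \row_(k < n) (ip G (lbr c X Y) (ebase k)
                            - ip G (lbr c Y (ebase k)) X
                            + ip G (lbr c (ebase k) X) Y)) *m invmx G.

Definition curv c G (X Y Z : 'rV[R]_n) : 'rV[R]_n :=
  nabla c G X (nabla c G Y Z) - nabla c G Y (nabla c G X Z)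
  - nabla c G (lbr c X Y) Z.

(* Ricci tensor ric(X,Y) = tr (Z |-> R(Z,X)Y) *)
Definition ric c G (X Y : 'rV[R]_n) : R :=
  \sum_(k < n) (curv c G (ebase k) X Y) 0 k.

(* Ricci operator: <Ric X, Y> = ric(X,Y) *)
Definition ricop c G (X : 'rV[R]_n) : 'rV[R]_n :=
  (\row_(k < n) ric c G X (ebase k)) *m invmx G.

Definition is_derivation c (D : 'M[R]_n) : Prop :=
  forall X Y : 'rV[R]_n, lbr c X Y *m D = lbr c (X *m D) Y + lbr c X (Y *m D).

Definition nilsoliton c G : Prop :=
  exists (cc : R) (D : 'M[R]_n), is_derivation c D /\
    forall X : 'rV[R]_n, ricop c G X = cc *: X + X *m D.

Definition einstein_nilradical c : Prop :=
  lie_nilpotent c /\ exists G : 'M[R]_n, inner_product G /\ nilsoliton c G.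

End LieDefs.

(* The 7-dimensional algebra; index k stands for e_(k+1). Brackets for i<j. *)
Definition n7_upper (R : realType) (i j : nat) : 'rV[R]_7 :=
  match i, j with
  | 0, 1 => @ebase R 7 (inord 3)
  | 0, 3 => @ebase R 7 (inord 4)
  | 0, 4 => @ebase R 7 (inord 5)
  | 0, 5 => @ebase R 7 (inord 6)
  | 1, 2 => @ebase R 7 (inord 5)
  | 1, 3 => @ebase R 7 (inord 5)
  | 1, 4 => @ebase R 7 (inord 6)
  | 2, 3 => - @ebase R 7 (inord 6)
  | _, _ => 0
  end.

Definition n7 (R : realType) (i j : 'I_7) : 'rV[R]_7 :=
  if (i < j)%N then n7_upper R i j
  else if (j < i)%N then - n7_upper R j i else 0.

(* The algebra is positively graded, e_1, ..., e_7 having degrees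
   1, 2, 3, 3, 4, 5, 6; hence it is nilpotent and the degree operator
   D : e_k |-> deg(e_k) e_k is a derivation.  Take the inner product whose Gram
   matrix is diagonal except for the block of e_3, e_4.  Its Christoffel
   symbols are rational and give
     ric(e_a, e_b) = (-125/56 + 15/28 deg e_a) <e_a, e_b>,
   so that Ric = -125/56 Id + 15/28 D: the metric is a nilsoliton. *)

From mathcomp Require Import all_boot all_order all_algebra.
From mathcomp Require Import reals.
From mathcomp Require Import ring lra zify.
Set Implicit Arguments. Unset Strict Implicit. Unset Printing Implicit Defensive.
Import Order.TTheory GRing.Theory Num.Theory.
Local Open Scope ring_scope.

Section LeftInvariantGeometry.
Variables (R : realType) (n : nat).
Implicit Types (c : 'I_n -> 'I_n -> 'rV[R]_n) (G : 'M[R]_n) (u v w X Y : 'rV[R]_n).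
Local Notation e := (@ebase R n).

Definition koszul c G X Y : 'rV[R]_n :=
  \row_(k < n) (ip G (lbr c X Y) (e k) - ip G (lbr c Y (e k)) X + ip G (lbr c (e k) X) Y).

Lemma nablaE c G X Y : nabla c G X Y = (2%:R^-1 *: koszul c G X Y) *m invmx G.
Proof. by []. Qed.

Lemma lbrE c u v k :
  lbr c u v 0 k = \sum_(i < n) \sum_(j < n) u 0 i * v 0 j * c i j 0 k.
Proof.
rewrite /lbr summxE; apply: eq_bigr => i _.
by rewrite summxE; apply: eq_bigr => j _; rewrite mxE.
Qed.

Lemma lbr_linearl c a u v w : lbr c (a *: u + v) w = a *: lbr c u w + lbr c v w.
Proof.
apply/rowP => k; rewrite !mxE !lbrE mulr_sumr -big_split; apply: eq_bigr => i _.
by rewrite mulr_sumr -big_split; apply: eq_bigr => j _; rewrite !mxE /=; ring.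
Qed.

Lemma lbr_linearr c a u v w : lbr c w (a *: u + v) = a *: lbr c w u + lbr c w v.
Proof.
apply/rowP => k; rewrite !mxE !lbrE mulr_sumr -big_split; apply: eq_bigr => i _.
by rewrite mulr_sumr -big_split; apply: eq_bigr => j _; rewrite !mxE /=; ring.
Qed.

Lemma ip_linearl G a u v w : ip G (a *: u + v) w = a * ip G u w + ip G v w.
Proof. by rewrite /ip !mulmxDl -!scalemxAl !mxE. Qed.

Lemma ip_linearr G a u v w : ip G w (a *: u + v) = a * ip G w u + ip G w v.
Proof. by rewrite /ip linearD linearZ /= mulmxDr -!scalemxAr !mxE. Qed.

Lemma koszul_linearl c G a u v w :
  koszul c G (a *: u + v) w = a *: koszul c G u w + koszul c G v w.
Proof.
by apply/rowP => k; rewrite !mxE lbr_linearl lbr_linearr !ip_linearl ip_linearr; ring.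
Qed.

Lemma koszul_linearr c G a u v w :
  koszul c G w (a *: u + v) = a *: koszul c G w u + koszul c G w v.
Proof.
by apply/rowP => k; rewrite !mxE lbr_linearl lbr_linearr !ip_linearl ip_linearr; ring.
Qed.

Lemma half_mulmx_linear (M : 'M[R]_n) a (K1 K2 : 'rV[R]_n) :
  (2%:R^-1 *: (a *: K1 + K2)) *m M = a *: ((2%:R^-1 *: K1) *m M) + (2%:R^-1 *: K2) *m M.
Proof. by rewrite scalerDr mulmxDl !scalerA mulrC -scalerA scalemxAl. Qed.

Lemma nabla_linearl c G a u v w :
  nabla c G (a *: u + v) w = a *: nabla c G u w + nabla c G v w.
Proof. by rewrite !nablaE koszul_linearl half_mulmx_linear. Qed.

Lemma nabla_linearr c G a u v w :
  nabla c G w (a *: u + v) = a *: nabla c G w u + nabla c G w v.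
Proof. by rewrite !nablaE koszul_linearr half_mulmx_linear. Qed.

Lemma curv_linear2 c G a u v X Y :
  curv c G X (a *: u + v) Y = a *: curv c G X u Y + curv c G X v Y.
Proof.
rewrite /curv !(nabla_linearl, nabla_linearr, lbr_linearr).
by move: (nabla c G) => N; apply/rowP => i; rewrite !mxE; ring.
Qed.

Lemma ric_linearl c G a u v Y : ric c G (a *: u + v) Y = a * ric c G u Y + ric c G v Y.
Proof.
rewrite /ric mulr_sumr -big_split; apply: eq_bigr => m _.
by rewrite curv_linear2 !mxE.
Qed.

Lemma ricop_linear c G a u v : ricop c G (a *: u + v) = a *: ricop c G u + ricop c G v.
Proof.
rewrite /ricop scalemxAl -mulmxDl; congr (_ *m _).
by apply/rowP => k; rewrite !mxE ric_linearl.
Qed.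

Lemma linear_ebase_expand (f : 'rV[R]_n -> 'rV[R]_n) :
  (forall a u v, f (a *: u + v) = a *: f u + f v) ->
  forall X, f X = \sum_(l < n) X 0 l *: f (e l).
Proof.
move=> f_lin X; have f0 : f 0 = 0.
  by have := f_lin 1 0 0; rewrite scaler0 addr0 scale1r -{1}[f 0]addr0 => /addrI/esym.
rewrite {1}(row_sum_delta X); elim/big_rec2: _ => // i u1 u2 _ <-.
by rewrite f_lin.
Qed.

Lemma ebaseE (i j : 'I_n) : e i 0 j = (i == j)%:R.
Proof. by rewrite /ebase mxE eqxx eq_sym. Qed.

Lemma lbr_ebase c i j : lbr c (e i) (e j) = c i j.
Proof.
apply/rowP => k; rewrite lbrE (bigD1 i) //= [X in _ + X]big1 ?addr0 => [|i' ne_i]; last first.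
  by apply: big1 => j' _; rewrite ebaseE eq_sym (negbTE ne_i) !mul0r.
rewrite (bigD1 j) //= [X in _ + X]big1 ?addr0 => [|j' ne_j]; last first.
  by rewrite !ebaseE eq_sym (negbTE ne_j) mulr0 mul0r.
by rewrite !ebaseE !eqxx !mul1r.
Qed.

Lemma ip_ebase G u k : ip G u (e k) = \sum_(j < n) u 0 j * G j k.
Proof.
rewrite /ip mxE (bigD1 k) //= [X in _ + X]big1 ?addr0 => [|l ne_l]; last first.
  by rewrite [_^T _ _]mxE ebaseE eq_sym (negbTE ne_l) mulr0.
by rewrite [_^T _ _]mxE ebaseE eqxx mulr1 mxE.
Qed.

Lemma ebase_mulmx (M : 'M[R]_n) a k : (e a *m M) 0 k = M a k.
Proof. by rewrite -rowE mxE. Qed.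

Lemma koszul_ebase c G a b k :
  koszul c G (e a) (e b) 0 k = \sum_(j < n) (c a b 0 j * G j k
                               - c b k 0 j * G j a + c k a 0 j * G j b).
Proof. by rewrite mxE !lbr_ebase !ip_ebase -sumrB -big_split. Qed.

Lemma nabla_unique c G X Y V :
  G \in unitmx -> V *m G = 2%:R^-1 *: koszul c G X Y -> nabla c G X Y = V.
Proof. by move=> G_unit VG; rewrite nablaE -VG mulmxK. Qed.

Lemma ric_ebase c G a b : ric c G (e a) (e b) =
  \sum_(m < n) \sum_(l < n) (nabla c G (e a) (e b) 0 l * nabla c G (e m) (e l) 0 m
    - nabla c G (e m) (e b) 0 l * nabla c G (e a) (e l) 0 m
    - c m a 0 l * nabla c G (e l) (e b) 0 m).
Proof.
rewrite /ric; apply: eq_bigr => m _; rewrite /curv lbr_ebase.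
have nabla_l X := linear_ebase_expand (fun a u v => nabla_linearr c G a u v X).
have nabla_r Y := linear_ebase_expand (fun a u v => nabla_linearl c G a u v Y).
rewrite (nabla_l (e m) (nabla c G (e a) (e b))).
rewrite (nabla_l (e a) (nabla c G (e m) (e b))) (nabla_r (e b) (c m a)).
by rewrite !mxE !summxE -!sumrB; apply: eq_bigr => l _; rewrite !mxE.
Qed.

Lemma ricop_ebase c G a r : G \in unitmx ->
  (forall b, ric c G (e a) (e b) = r * G a b) -> ricop c G (e a) = r *: e a.
Proof.
move=> G_unit ricE; rewrite /ricop.
have -> : \row_k ric c G (e a) (e k) = r *: (e a *m G).
  by apply/rowP => k; rewrite mxE ricE [RHS]mxE ebase_mulmx.
by rewrite -scalemxAl mulmxK.
Qed.

Lemma inner_product_unit G : inner_product G -> G \in unitmx.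
Proof.
case=> _ G_pos; rewrite -row_free_unit -kermx_eq0; apply: contraT => K0.
have [i Ki] : exists i, row i (kermx G) != 0.
  apply/existsP; apply: contraT => /existsPn Kr; case/eqP: K0.
  by apply/row_matrixP => i; rewrite row0; apply/eqP/negbNE.
by have := G_pos _ Ki; rewrite -row_mul mulmx_ker row0 mul0mx mxE ltxx.
Qed.

Definition graded_by (d : 'I_n -> R) c : Prop :=
  forall i j k, c i j 0 k = 0 \/ d k = d i + d j.

Lemma graded_derivation c (d : 'I_n -> R) :
  graded_by d c -> is_derivation c (diag_mx (\row_k d k)).
Proof.
move=> c_graded X Y; apply/rowP => k; rewrite !mul_mx_diag !mxE !lbrE.
rewrite mulr_suml -big_split; apply: eq_bigr => i _.
rewrite mulr_suml -big_split; apply: eq_bigr => j _; rewrite /= !mxE.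
by case: (c_graded i j k) => ->; ring.
Qed.

Lemma nilsoliton_of_ric_graded c G (d : 'I_n -> R) (cc : R) :
  G \in unitmx -> graded_by d c ->
  (forall a b, ric c G (e a) (e b) = (cc + d a) * G a b) -> nilsoliton c G.
Proof.
move=> G_unit c_graded ricE; exists cc, (diag_mx (\row_k d k)).
split; first exact: graded_derivation.
move=> X; rewrite (linear_ebase_expand (ricop_linear c G) X).
apply/rowP => k; rewrite summxE (bigD1 k) //= [X in _ + X]big1 ?addr0 => [|l ne_l].
  by rewrite (ricop_ebase G_unit (ricE k)) mul_mx_diag !mxE !eqxx /=; ring.
by rewrite (ricop_ebase G_unit (ricE l)) !mxE eq_sym (negbTE ne_l) andbF !mulr0.
Qed.

Lemma graded_lie_nilpotent c (w : 'I_n -> nat) N :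
  (forall k, 0 < w k <= N)%N ->
  (forall i j k, c i j 0 k = 0 \/ w k = (w i + w j)%N) -> lie_nilpotent c.
Proof.
move=> w_bounds c_graded; exists N => xs y.
suff low_vanish (s : seq 'rV[R]_n) k : (w k <= size s)%N ->
    foldr (fun x acc => lbr c x acc) y s 0 k = 0.
  by apply/rowP => k; rewrite mxE low_vanish // size_tuple; case/andP: (w_bounds k).
elim: s k => [|x s IHs] k /=.
  by move=> w_k0; case/andP: (w_bounds k); rewrite ltnNge w_k0.
move=> w_k; rewrite lbrE; apply: big1 => i _; apply: big1 => j _.
case: (c_graded i j k) => [->|w_kE]; first by rewrite mulr0.
rewrite IHs ?mulr0 ?mul0r //; move: w_k; rewrite w_kE.
by case/andP: (w_bounds i) => w_i _; lia.
Qed.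

End LeftInvariantGeometry.

Ltac case_lt7 k k_lt7 := case: k k_lt7 => [|[|[|[|[|[|[|k]]]]]]] k_lt7 //.

Section N7.
Variable R : realType.
Local Notation e := (@ebase R 7).

Definition sum7 (F : nat -> R) : R := F 0%N + F 1%N + F 2%N + F 3%N + F 4%N + F 5%N + F 6%N.

Lemma big_ord7 (F : nat -> R) : \sum_(k < 7) F k = sum7 F.
Proof. by rewrite /sum7 !big_ord_recl big_ord0 addr0 /= !addrA. Qed.

Definition bracket_coef (i j k : nat) : R :=
  match i, j, k with
  | 0, 1, 3 => 1 | 1, 0, 3 => -1
  | 0, 3, 4 => 1 | 3, 0, 4 => -1
  | 0, 4, 5 => 1 | 4, 0, 5 => -1
  | 0, 5, 6 => 1 | 5, 0, 6 => -1
  | 1, 2, 5 => 1 | 2, 1, 5 => -1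
  | 1, 3, 5 => 1 | 3, 1, 5 => -1
  | 1, 4, 6 => 1 | 4, 1, 6 => -1
  | 2, 3, 6 => -1 | 3, 2, 6 => 1
  | _, _, _ => 0
  end.

Definition weight (k : nat) : nat :=
  match k with 0 => 1 | 1 => 2 | 2 | 3 => 3 | 4 => 4 | 5 => 5 | _ => 6 end.

(* Large denominators are factored: numerals of [R] are unary [nat]s, and
   those beyond about 20000 overflow the stack. *)
Definition gram_coef (i j : nat) : R :=
  match i, j with
  | 0, 0 | 1, 1 => 1
  | 2, 2 | 4, 4 => 100 / 133
  | 2, 3 | 3, 2 => 50 / 133
  | 3, 3 => 120 / 133
  | 5, 5 => 500 / (7 * 133)
  | 6, 6 => 6875 / (133 * 133)
  | _, _ => 0
  end.

(* [christoffel a b l] is the e_l-coordinate of nabla_{e_a} e_b. *)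
Definition christoffel (a b l : nat) : R :=
  match a with
  | 0 => match b, l with
         | 1, 3 => 1 / 2
         | 2, 1 => - (25 / 133)
         | 3, 1 => - (60 / 133) | 3, 4 => 1 / 2
         | 4, 2 => 5 / 19 | 4, 3 => - (10 / 19) | 4, 5 => 1 / 2
         | 5, 4 => - (5 / 14) | 5, 6 => 1 / 2
         | 6, 5 => - (55 / 152)
         | _, _ => 0 end
  | 1 => match b, l with
         | 0, 3 => - (1 / 2)
         | 2, 0 => 25 / 133 | 2, 5 => 1 / 2
         | 3, 0 => 60 / 133 | 3, 5 => 1 / 2
         | 4, 6 => 1 / 2
         | 5, 2 => - (5 / 19) | 5, 3 => - (25 / 133)
         | 6, 4 => - (275 / (8 * 133))
         | _, _ => 0 end
  | 2 => match b, l with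
         | 0, 1 => - (25 / 133)
         | 1, 0 => 25 / 133 | 1, 5 => - (1 / 2)
         | 3, 6 => - (1 / 2)
         | 5, 1 => 250 / (7 * 133)
         | 6, 2 => - (1375 / (76 * 133)) | 6, 3 => 1375 / (38 * 133)
         | _, _ => 0 end
  | 3 => match b, l with
         | 0, 1 => - (60 / 133) | 0, 4 => - (1 / 2)
         | 1, 0 => 60 / 133 | 1, 5 => - (1 / 2)
         | 2, 6 => 1 / 2
         | 4, 0 => 50 / 133
         | 5, 1 => 250 / (7 * 133)
         | 6, 2 => - (825 / (19 * 133)) | 6, 3 => 1375 / (76 * 133)
         | _, _ => 0 end
  | 4 => match b, l with
         | 0, 2 => 5 / 19 | 0, 3 => - (10 / 19) | 0, 5 => - (1 / 2)
         | 1, 6 => - (1 / 2)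
         | 3, 0 => 50 / 133
         | 5, 0 => 250 / (7 * 133)
         | 6, 1 => 6875 / (266 * 133)
         | _, _ => 0 end
  | 5 => match b, l with
         | 0, 4 => - (5 / 14) | 0, 6 => - (1 / 2)
         | 1, 2 => - (5 / 19) | 1, 3 => - (25 / 133)
         | 2, 1 => 250 / (7 * 133)
         | 3, 1 => 250 / (7 * 133)
         | 4, 0 => 250 / (7 * 133)
         | 6, 0 => 6875 / (266 * 133)
         | _, _ => 0 end
  | _ => match b, l with
         | 0, 5 => - (55 / 152)
         | 1, 4 => - (275 / (8 * 133))
         | 2, 2 => - (1375 / (76 * 133)) | 2, 3 => 1375 / (38 * 133)
         | 3, 2 => - (825 / (19 * 133)) | 3, 3 => 1375 / (76 * 133)
         | 4, 1 => 6875 / (266 * 133)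
         | 5, 0 => 6875 / (266 * 133)
         | _, _ => 0 end
  end.

Lemma n7E (i j k : 'I_7) : n7 R i j 0 k = bracket_coef i j k.
Proof.
case: i => [[|[|[|[|[|[|[|i]]]]]]] ?] //; case: j => [[|[|[|[|[|[|[|j]]]]]]] ?] //;
case: k => [[|[|[|[|[|[|[|k]]]]]]] ?] //.
all: by rewrite /n7 /= ?mxE -?val_eqE /= ?inordK //= ?oppr0 ?opprK.
Qed.

Lemma bracket_coef_graded i j k : (i < 7)%N -> (j < 7)%N -> (k < 7)%N ->
  bracket_coef i j k = 0 \/ weight k = (weight i + weight j)%N.
Proof.
move=> i7 j7 k7; case_lt7 i i7; case_lt7 j j7; case_lt7 k k7.
all: first [by left | by right].
Qed.

Lemma christoffel_table a b k : (a < 7)%N -> (b < 7)%N -> (k < 7)%N ->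
  sum7 (fun l => christoffel a b l * gram_coef l k) =
  2%:R^-1 * sum7 (fun j => bracket_coef a b j * gram_coef j k
                  - bracket_coef b k j * gram_coef j a + bracket_coef k a j * gram_coef j b).
Proof.
move=> a7 b7 k7; case_lt7 a a7; case_lt7 b b7; case_lt7 k k7.
all: cbv beta iota delta [sum7 bracket_coef gram_coef christoffel]; by field.
Qed.

Definition ric_eigen (k : nat) : R := - (125 / 56) + 15 / 28 * (weight k)%:R.

Lemma ricci_table a b : (a < 7)%N -> (b < 7)%N ->
  sum7 (fun m => sum7 (fun l =>
    christoffel a b l * christoffel m l m - christoffel m b l * christoffel a l m
    - bracket_coef m a l * christoffel l b m)) =
  ric_eigen a * gram_coef a b.
Proof.
move=> a7 b7; case_lt7 a a7; case_lt7 b b7.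
all: cbv beta iota delta [sum7 bracket_coef christoffel gram_coef ric_eigen weight]; by field.
Qed.

Definition gram : 'M[R]_7 := \matrix_(i, j) gram_coef i j.

Lemma gram_quad_form (v : 'rV[R]_7) :
  (v *m gram *m v^T) 0 0 =
  sum7 (fun j => sum7 (fun i => v 0 (inord i) * gram_coef i j * v 0 (inord j))).
Proof.
rewrite mxE -big_ord7; apply: eq_bigr => j _; rewrite mxE [v^T _ _]mxE mulr_suml -big_ord7.
by apply: eq_bigr => i _; rewrite mxE !inord_val.
Qed.

Lemma gram_inner_product : inner_product gram.
Proof.
split.
  by apply/matrixP => [[i i7] [j j7]]; rewrite !mxE /=; case_lt7 i i7; case_lt7 j j7.
move=> v v_neq0; rewrite gram_quad_form.
set x := fun k => v 0 (inord k).
have -> : sum7 (fun j => sum7 (fun i => x i * gram_coef i j * x j)) =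
  x 0%N ^+ 2 + x 1%N ^+ 2 + (50 * (x 2%N + x 3%N) ^+ 2 + 50 * x 2%N ^+ 2 + 70 * x 3%N ^+ 2) / 133
  + 100 / 133 * x 4%N ^+ 2 + 500 / (7 * 133) * x 5%N ^+ 2 + 6875 / (133 * 133) * x 6%N ^+ 2.
  by cbv beta iota delta [sum7 gram_coef]; field.
have [k xk_neq0] : exists k : 'I_7, x k != 0.
  apply/existsP; apply: contraT => /existsPn x0; case/eqP: v_neq0.
  by apply/rowP => k; have := x0 k; rewrite negbK /x inord_val mxE => /eqP.
have xk_pos : 0 < x k ^+ 2 by rewrite exprn_even_gt0.
have := sqr_ge0 (x 0%N); have := sqr_ge0 (x 1%N); have := sqr_ge0 (x 2%N).
have := sqr_ge0 (x 3%N); have := sqr_ge0 (x 4%N); have := sqr_ge0 (x 5%N).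
have := sqr_ge0 (x 6%N); have := sqr_ge0 (x 2%N + x 3%N).
by case: k xk_neq0 xk_pos => [[|[|[|[|[|[|[|k]]]]]]] k7] //= _; lra.
Qed.

Lemma gram_unit : gram \in unitmx.
Proof. exact: inner_product_unit gram_inner_product. Qed.

Lemma nabla_n7 (a b : 'I_7) :
  nabla (n7 R) gram (e a) (e b) = \row_(l < 7) christoffel a b l.
Proof.
apply: nabla_unique gram_unit _; apply/rowP => k.
rewrite mxE [RHS]mxE koszul_ebase.
under eq_bigr do rewrite !mxE.
under [in RHS]eq_bigr do rewrite !n7E !mxE.
rewrite (big_ord7 (fun l => christoffel a b l * gram_coef l k)).
rewrite (big_ord7 (fun j => bracket_coef a b j * gram_coef j k
  - bracket_coef b k j * gram_coef j a + bracket_coef k a j * gram_coef j b)).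
exact: christoffel_table.
Qed.

Lemma ric_n7 (a b : 'I_7) :
  ric (n7 R) gram (e a) (e b) = ric_eigen a * gram a b.
Proof.
rewrite ric_ebase mxE -ricci_table // -big_ord7; apply: eq_bigr => m _.
by rewrite -big_ord7; apply: eq_bigr => l _; rewrite !nabla_n7 !mxE n7E.
Qed.
End N7.

Theorem mainTheorem9 (R : realType) : einstein_nilradical (n7 R).
Proof.
split.
  apply: (@graded_lie_nilpotent R 7 (n7 R) (fun k => weight k) 6).
    by case=> [[|[|[|[|[|[|[|k]]]]]]] ?].
  by move=> i j k; rewrite n7E; apply: bracket_coef_graded.
exists (gram R); split; first exact: gram_inner_product.
apply: (nilsoliton_of_ric_graded (gram_unit R) _ (@ric_n7 R)).
move=> i j k; rewrite n7E.
have [->|w_k] := bracket_coef_graded R (ltn_ord i) (ltn_ord j) (ltn_ord k); [by left | right].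
by rewrite /ric_eigen w_k natrD; ring.
Qed.
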